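(* In $\mathscr{L}=\mathbf{Set}^{\mathbf{[R]}}$ as described in the context, let $E$ be a central object (an object of the Drinfeld center of $\mathscr{L}$). Then the monad $T\mathcal{E}=T(-\oplus E)$ has a left strength, i.e. a family of morphisms $\Gamma\otimes T(A\oplus E)\to T((\Gamma\otimes A)\oplus E)$, natural in $\Gamma$ and $A$, compatible with the unit and multiplication of $T\mathcal{E}$ and with the associator and unitor of $\otimes$.
   Context: $\mathbf{[R]}$ is the set of finite lists of natural numbers, seen as a discrete category; $++$ is concatenation. $\mathscr{L}=\mathbf{Set}^{\mathbf{[R]}}$: objects are families of sets $A(l)$ indexed by lists $l$; morphisms are families of functions. Monoidal product (Day convolution): $(A\otimes B)(l)=\coprod_{l_1++l_2=l}A(l_1)\times B(l_2)$; unit $I([])=\{()\}$, $I(l)=\emptyset$ otherwise. Coproducts are pointwise: $(A\oplus B)(l)=A(l)+B(l)$. Right closed structure: $(A\rhd B)(l_1)=\prod_{l_2}(A(l_2)\to B(l_1++l_2))$. $[R](l)=\{l\}$. The allocation monad $T=[R]\rhd(-\otimes[R])$ is the monad of the adjunction $(-\otimes[R])\dashv([R]\rhd-)$. For an object $E$, $\mathcal{E}=-\oplus E$ is the exception monad and $T\mathcal{E}$ is the composite monad obtained from the distributive law $\mathcal{E}T\to T\mathcal{E}$ given by the copairing of $T(\mathrm{inl})$ and $\mathrm{inr};\eta$. $E$ is central (in the Drinfeld center) if there is a natural isomorphism $\theta_A:E\otimes A\cong A\otimes E$ with $\theta_{A\otimes B}=(\theta_A\otimes\mathrm{id});(\mathrm{id}\otimes\theta_B)$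 up to associators. *)

(* The presheaf category L = Set^[R], [R] = lists of naturals
   as a discrete category, presented concretely. *)
From Stdlib Require Import List.
Import ListNotations.



Definition Obj := list nat -> Set.

Definition Mor (A B : Obj) := forall l : list nat, A l -> B l.

Definition meq {A B : Obj} (f g : Mor A B) : Prop :=
  forall l (x : A l), f l x = g l x.

Definition idm (A : Obj) : Mor A A := fun l x => x.

(** Diagrammatic composition: [comp f g] is "f ; g" (first f, then g). *)
Definition comp {A B C : Obj} (f : Mor A B) (g : Mor B C) : Mor A C :=
  fun l x => g l (f l x).

(** Day convolution: (A ⊗ B)(l) = ∐_{l1 ++ l2 = l} A(l1) × B(l2). *)
Inductive tensor (A B : Obj) (l : list nat) : Set :=
  tpair (l1 l2 : list nat) (e : l1 ++ l2 = l) (a : A l1) (b : B l2).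
Arguments tpair {A B l} l1 l2 e a b.

Definition tmap {A A' B B' : Obj} (f : Mor A A') (g : Mor B B') :
  Mor (tensor A B) (tensor A' B') :=
  fun l t => match t with tpair l1 l2 e a b => tpair l1 l2 e (f l1 a) (g l2 b) end.

Definition Iobj : Obj := fun l => match l with [] => unit | _ :: _ => Empty_set end.

Definition lunit (A : Obj) : Mor (tensor Iobj A) A :=
  fun l t =>
    match t with
    | tpair l1 l2 e i a =>
      (match l1 as l1' return Iobj l1' -> l1' ++ l2 = l -> A l with
       | [] => fun _ e' => eq_rect l2 A a l e'
       | _ :: _ => fun i _ => match i with end
       end) i e
    end.

Lemma assoc_eq (l1 l2 l3 l12 l : list nat) :
  l1 ++ l2 = l12 -> l12 ++ l3 = l -> l1 ++ (l2 ++ l3) = l.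
Proof. intros H1 H2. subst. apply app_assoc. Qed.

Lemma assoc_inv_eq (l1 l2 l3 l23 l : list nat) :
  l2 ++ l3 = l23 -> l1 ++ l23 = l -> (l1 ++ l2) ++ l3 = l.
Proof. intros H1 H2. subst. symmetry. apply app_assoc. Qed.

Definition assoc (A B C : Obj) : Mor (tensor (tensor A B) C) (tensor A (tensor B C)) :=
  fun l t =>
    match t with
    | tpair l12 l3 e t' c =>
      match t' with
      | tpair l1 l2 e' a b =>
        tpair l1 (l2 ++ l3) (@assoc_eq l1 l2 l3 l12 l e' e) a (tpair l2 l3 eq_refl b c)
      end
    end.

Definition assoc_inv (A B C : Obj) : Mor (tensor A (tensor B C)) (tensor (tensor A B) C) :=
  fun l t =>
    match t with
    | tpair l1 l23 e a t' =>
      match t' with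
      | tpair l2 l3 e' b c =>
        tpair (l1 ++ l2) l3 (@assoc_inv_eq l1 l2 l3 l23 l e' e) (tpair l1 l2 eq_refl a b) c
      end
    end.

Definition oplus (A B : Obj) : Obj := fun l => (A l + B l)%type.
Definition inlm (A B : Obj) : Mor A (oplus A B) := fun l x => inl x.
Definition inrm (A B : Obj) : Mor B (oplus A B) := fun l x => inr x.
Definition copair {A B C : Obj} (f : Mor A C) (g : Mor B C) : Mor (oplus A B) C :=
  fun l x => match x with inl a => f l a | inr b => g l b end.
Definition omap {A A' B B' : Obj} (f : Mor A A') (g : Mor B B') :
  Mor (oplus A B) (oplus A' B') :=
  copair (comp f (inlm A' B')) (comp g (inrm A' B')).

(** Right closed structure: (A ▷ B)(l1) = ∏_{l2} (A(l2) → B(l1 ++ l2)). *)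
Definition rhd (A B : Obj) : Obj := fun l1 => forall l2 : list nat, A l2 -> B (l1 ++ l2).

(** [R](l) = {l}. *)
Definition RR : Obj := fun l => {l' : list nat | l' = l}.

(** The allocation monad T = [R] ▷ (- ⊗ [R]), monad of (- ⊗ [R]) ⊣ ([R] ▷ -). *)
Definition T (A : Obj) : Obj := rhd RR (tensor A RR).

Definition Tmap {A B : Obj} (f : Mor A B) : Mor (T A) (T B) :=
  fun l t l2 r => tmap f (idm RR) (l ++ l2) (t l2 r).

Definition etaT (A : Obj) : Mor A (T A) :=
  fun l a l2 r => tpair l l2 eq_refl a r.

Definition epsT (B : Obj) : Mor (tensor (rhd RR B) RR) B :=
  fun l t => match t with tpair m1 m2 e f r => eq_rect (m1 ++ m2) B (f m2 r) l e end.

(** Multiplication  T T A = [R] ▷ (([R] ▷ (A⊗[R])) ⊗ [R]) → [R] ▷ (A⊗[R]),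
    i.e. [R] ▷ ε_{A⊗[R]}. *)
Definition muT (A : Obj) : Mor (T (T A)) (T A) :=
  fun l t l2 r => epsT (tensor A RR) (l ++ l2) (t l2 r).

Definition TE (E A : Obj) : Obj := T (oplus A E).

Definition TEmap (E : Obj) {A B : Obj} (f : Mor A B) : Mor (TE E A) (TE E B) :=
  Tmap (omap f (idm E)).

Definition etaTE (E A : Obj) : Mor A (TE E A) :=
  comp (inlm A E) (etaT (oplus A E)).

(** Distributive law E T → T E : copairing of T(inl) and inr ; η. *)
Definition distl (E X : Obj) : Mor (oplus (T X) E) (T (oplus X E)) :=
  copair (Tmap (inlm X E)) (comp (inrm X E) (etaT (oplus X E))).

Definition muE (E A : Obj) : Mor (oplus (oplus A E) E) (oplus A E) :=
  copair (idm (oplus A E)) (inrm A E).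

(** Multiplication of the composite monad:
    T E T E A --T λ--> T T E E A --T T μ^E--> T T E A --μ^T--> T E A. *)
Definition muTE (E A : Obj) : Mor (TE E (TE E A)) (TE E A) :=
  comp (Tmap (distl E (oplus A E)))
       (comp (Tmap (Tmap (muE E A))) (muT (oplus A E))).

Definition half_braiding (E : Obj) (theta : forall A, Mor (tensor E A) (tensor A E)) : Prop :=
  (exists theta_inv : forall A, Mor (tensor A E) (tensor E A),
      forall A, meq (comp (theta A) (theta_inv A)) (idm _)
             /\ meq (comp (theta_inv A) (theta A)) (idm _))
  /\ (forall (A B : Obj) (f : Mor A B),
        meq (comp (tmap (idm E) f) (theta B)) (comp (theta A) (tmap f (idm E))))
  /\ (forall A B : Obj,
        meq (theta (tensor A B))
            (comp (assoc_inv E A B)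
            (comp (tmap (theta A) (idm B))
            (comp (assoc A E B)
            (comp (tmap (idm A) (theta B))
                  (assoc_inv A B E)))))).

Definition central (E : Obj) : Prop :=
  exists theta : forall A, Mor (tensor E A) (tensor A E), half_braiding E theta.

Definition is_left_strength (M : Obj -> Obj)
  (Mmap : forall A B : Obj, Mor A B -> Mor (M A) (M B))
  (eta : forall A, Mor A (M A)) (mu : forall A, Mor (M (M A)) (M A))
  (st : forall G A : Obj, Mor (tensor G (M A)) (M (tensor G A))) : Prop :=
  (forall (G G' A A' : Obj) (f : Mor G G') (g : Mor A A'),
      meq (comp (tmap f (Mmap A A' g)) (st G' A'))
          (comp (st G A) (Mmap _ _ (tmap f g))))
  /\ (forall A : Obj,
      meq (comp (st Iobj A) (Mmap _ _ (lunit A))) (lunit (M A)))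
  /\ (forall G D A : Obj,
      meq (comp (st (tensor G D) A) (Mmap _ _ (assoc G D A)))
          (comp (assoc G D (M A)) (comp (tmap (idm G) (st D A)) (st G (tensor D A)))))
  /\ (forall G A : Obj,
      meq (comp (tmap (idm G) (eta A)) (st G A)) (eta (tensor G A)))
  /\ (forall G A : Obj,
      meq (comp (tmap (idm G) (mu A)) (st G A))
          (comp (st G (M A)) (comp (Mmap _ _ (st G A)) (mu (tensor G A))))).

(* Already a family of maps E ⊗ A → A ⊗ E, such as a half-braiding, forces E
   to be concentrated at the empty list: swapping an element of E(y :: l) with
   an element of a presheaf supported at [S y] would produce an index list
   starting with both y and S y.  A raised exception therefore occupies no
   locations, so the strength of T extends to T(- ⊕ E) by letting an exception
   pass the context Γ and handing Γ's locations to the residual [R] component.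
   The laws then hold by computation, up to uniqueness of proofs of equalities
   between lists. *)
From Stdlib Require Import List PeanoNat Eqdep_dec FunctionalExtensionality.
Import ListNotations.

Lemma UIP_list_nat {l l' : list nat} (p q : l = l') : p = q.
Proof. apply UIP_dec, list_eq_dec, Nat.eq_dec. Qed.

Lemma RR_eq (l : list nat) (x y : RR l) : x = y.
Proof. destruct x as [x ->], y as [y ->]. reflexivity. Qed.

Lemma tpair_RR_eq {X : Obj} {L l1 l2 l2'} (e : l1 ++ l2 = L) (e' : l1 ++ l2' = L)
  (x : X l1) (b : RR l2) (b' : RR l2') :
  tpair l1 l2 e x b = tpair l1 l2' e' x b'.
Proof.
  assert (l2 = l2') as <- by (apply (app_inv_head l1); congruence).
  rewrite (UIP_list_nat e e'), (RR_eq _ b b'). reflexivity.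
Qed.

Lemma tpair_RR_inl_tpair_eq {P Q F : Obj} {L l1 l1' l2 l2' p q}
  (e : l1 ++ l2 = L) (e' : l1' ++ l2' = L) (h : p ++ q = l1) (h' : p ++ q = l1')
  (x : P p) (y : Q q) (b : RR l2) (b' : RR l2') :
  @tpair (oplus (tensor P Q) F) RR L l1 l2 e (inl (tpair p q h x y)) b =
  tpair l1' l2' e' (inl (tpair p q h' x y)) b'.
Proof. subst l1 l1'. apply tpair_RR_eq. Qed.

Lemma eq_rect_tpair {X Y : Obj} {L L'} (H : L = L') l1 l2 e (x : X l1) (y : Y l2) :
  eq_rect L (tensor X Y) (tpair l1 l2 e x y) L' H = tpair l1 l2 (eq_trans e H) x y.
Proof. destruct H, e. reflexivity. Qed.

Definition concentrated_at_nil (E : Obj) : Prop := forall l, E l -> l = [].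

Lemma swap_concentrated_at_nil (E : Obj)
  (theta : forall A, Mor (tensor E A) (tensor A E)) : concentrated_at_nil E.
Proof.
  intros [|y l] x; [reflexivity|]. exfalso.
  pose (A := (fun m => {_ : unit | m = [S y]}) : Obj).
  destruct (theta A _ (tpair (y :: l) [S y] eq_refl x (exist _ tt eq_refl)))
    as [m1 m2 h [_ ->] _].
  injection h as Hy _. exact (n_Sn y (eq_sym Hy)).
Qed.

Lemma central_concentrated_at_nil (E : Obj) : central E -> concentrated_at_nil E.
Proof. intros [theta _]. exact (swap_concentrated_at_nil E theta). Qed.

Lemma strength_inl_eq (l1 l2 l l3 m1 m2 : list nat) :
  l1 ++ l2 = l -> m1 ++ m2 = l2 ++ l3 -> (l1 ++ m1) ++ m2 = l ++ l3.
Proof. intros <- e. rewrite <- !app_assoc, e. reflexivity. Qed.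

Lemma strength_inr_eq (l1 l2 l l3 m1 m2 : list nat) :
  l1 ++ l2 = l -> m1 ++ m2 = l2 ++ l3 -> m1 = [] -> m1 ++ (l1 ++ m2) = l ++ l3.
Proof. intros <- e ->. cbn in *. subst m2. cbn. apply app_assoc. Qed.

Section ExceptionStrength.

Variable E : Obj.
Hypothesis E_nil : concentrated_at_nil E.

Definition TE_strength (G A : Obj) : Mor (tensor G (TE E A)) (TE E (tensor G A)) :=
  fun l x => match x with tpair l1 l2 e g t =>
    fun l3 r => match t l3 r with tpair m1 m2 e' y _ =>
      match y with
      | inl a => tpair (l1 ++ m1) m2 (strength_inl_eq _ _ _ _ _ _ e e')
                   (inl (tpair l1 m1 eq_refl g a)) (exist _ m2 eq_refl)
      | inr ee => tpair m1 (l1 ++ m2) (strength_inr_eq _ _ _ _ _ _ e e' (E_nil m1 ee))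
                   (inr ee) (exist _ (l1 ++ m2) eq_refl)
      end
    end
  end.

Lemma TE_strength_natural (G G' A A' : Obj) (f : Mor G G') (g : Mor A A') :
  meq (comp (tmap f (TEmap E g)) (TE_strength G' A'))
      (comp (TE_strength G A) (TEmap E (tmap f g))).
Proof.
  intros l [l1 l2 e c t].
  unfold comp, tmap, TE_strength, TEmap, Tmap.
  extensionality l3. extensionality r. cbn.
  destruct (t l3 r) as [m1 m2 e' [a|ee] r']; reflexivity.
Qed.

Lemma TE_strength_lunit (A : Obj) :
  meq (comp (TE_strength Iobj A) (TEmap E (lunit A))) (lunit (TE E A)).
Proof.
  intros l [[|k l1] l2 e i t]; [|destruct i].
  cbn in e. subst l2.
  unfold comp, TE_strength, TEmap, Tmap.
  extensionality l3. extensionality r. cbn.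
  destruct (t l3 r) as [m1 m2 e' [a|ee] r']; apply tpair_RR_eq.
Qed.

Lemma TE_strength_assoc (G D A : Obj) :
  meq (comp (TE_strength (tensor G D) A) (TEmap E (assoc G D A)))
      (comp (assoc G D (TE E A))
            (comp (tmap (idm G) (TE_strength D A)) (TE_strength G (tensor D A)))).
Proof.
  intros l [l12 l3 e [lg ld eg c d] t]. subst l12 l.
  unfold comp, TE_strength, TEmap, Tmap, tmap, assoc.
  extensionality l4. extensionality r. cbn.
  destruct (t l4 r) as [m1 m2 e' [a|ee] r'].
  - apply tpair_RR_inl_tpair_eq.
  - apply tpair_RR_eq.
Qed.

Lemma TE_strength_eta (G A : Obj) :
  meq (comp (tmap (idm G) (etaTE E A)) (TE_strength G A)) (etaTE E (tensor G A)).
Proof.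
  intros l [l1 l2 e c a]. subst l.
  extensionality l3. extensionality r. apply tpair_RR_eq.
Qed.

Lemma TE_strength_mu (G A : Obj) :
  meq (comp (tmap (idm G) (muTE E A)) (TE_strength G A))
      (comp (TE_strength G (TE E A))
            (comp (TEmap E (TE_strength G A)) (muTE E (tensor G A)))).
Proof.
  intros l [l1 l2 e c t]. subst l.
  unfold muTE, muT, epsT, distl, muE, TEmap, Tmap, TE_strength, comp, tmap,
    omap, copair, inlm, inrm, etaT, idm.
  extensionality l3. extensionality r. cbn.
  destruct (t l3 r) as [m1 m2 e1 [u|ee] r1]; cbn.
  - (* One side resumes [u] on [r1], the other on the canonical element of [RR m2]. *)
    rewrite (RR_eq _ (exist _ m2 eq_refl) r1).
    destruct (u m2 r1) as [k1 k2 e2 [a|ee] r2]; cbn;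
      rewrite !eq_rect_tpair; apply tpair_RR_eq.
  - rewrite !eq_rect_tpair. apply tpair_RR_eq.
Qed.

Lemma TE_strength_is_left_strength :
  is_left_strength (TE E) (fun A B f => TEmap E f) (etaTE E) (muTE E) TE_strength.
Proof.
  repeat split.
  - exact TE_strength_natural.
  - exact TE_strength_lunit.
  - exact TE_strength_assoc.
  - exact TE_strength_eta.
  - exact TE_strength_mu.
Qed.

End ExceptionStrength.

Theorem proposition4 (E : Obj) (HE : central E) :
  exists st : forall G A : Obj, Mor (tensor G (TE E A)) (TE E (tensor G A)),
    is_left_strength (TE E) (fun A B f => TEmap E f) (etaTE E) (muTE E) st.
Proof.
  exists (TE_strength E (central_concentrated_at_nil E HE)).
  apply TE_strength_is_left_strength.
Qed.
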